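(* Let $m,n\ge 2$ be integers not divisible by $3$. Every closed toroidal 1-form $f\,dx+g\,dy$ can be written uniquely in the form $r\,dx+s\,dy+\omega$ where $r,s\in\mathbb{F}_3$ (viewed as constant functions) and $\omega$ is an exact toroidal 1-form; that is, there exist unique $r,s\in\mathbb{F}_3$ and a unique exact toroidal 1-form $\omega=u\,dx+w\,dy$ with $f=r+u$ and $g=s+w$.
   Context: A function $h:\mathbb{Z}\times\mathbb{Z}\to\mathbb{F}_3$ is doubly periodic if $h_{i+m,j}=h_{i,j+n}=h_{i,j}$ for all $i,j\in\mathbb{Z}$. Its partial derivatives are $(D_xh)_{i,j}=h_{i+1,j}-h_{i,j}$ and $(D_yh)_{i,j}=h_{i,j+1}-h_{i,j}$ (again doubly periodic). A toroidal 1-form is a formal expression $f\,dx+g\,dy$ with $f,g:\mathbb{Z}\times\mathbb{Z}\to\mathbb{F}_3$ doubly periodic; it is closed if $D_yf=D_xg$, and exact if $f=D_xh$, $g=D_yh$ for some doubly periodic $h:\mathbb{Z}\times\mathbb{Z}\to\mathbb{F}_3$. *)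

From mathcomp Require Import all_boot all_algebra.
Set Implicit Arguments. Unset Strict Implicit. Unset Printing Implicit Defensive.
Import GRing.Theory.
Local Open Scope ring_scope.

Definition F3 := 'F_3.
Definition grid := int -> int -> F3.

Definition doubly_periodic (m n : nat) (h : grid) : Prop :=
  forall i j : int, h (i + m%:Z) j = h i j /\ h i (j + n%:Z) = h i j.

Definition Dx (h : grid) : grid := fun i j => h (i + 1) j - h i j.
Definition Dy (h : grid) : grid := fun i j => h i (j + 1) - h i j.

(* A toroidal 1-form f dx + g dy is represented by the pair (f, g). *)
Definition toroidal_form (m n : nat) (f g : grid) : Prop :=
  doubly_periodic m n f /\ doubly_periodic m n g.

Definition closed_form (f g : grid) : Prop := Dy f = Dx g.

Definition exact_form (m n : nat) (f g : grid) : Prop :=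
  exists h : grid, doubly_periodic m n h /\ f = Dx h /\ g = Dy h.

Definition cst (c : F3) : grid := fun _ _ => c.

Definition addg (a b : grid) : grid := fun i j => a i j + b i j.

(* Since 3 divides neither m nor n, the periods of f along the two generating
   cycles of the torus can be divided by m and n: this gives r and s, and
   f - r, g - s then have zero periods.  A closed periodic form with zero
   periods is exact, a potential being the sum of the form along the path
   (0,0) -> (a,0) -> (a,b) in the fundamental domain.  Conversely an exact form
   has zero periods (the sums telescope), so r and s are forced to be the
   averaged periods of f and g, and then u = f - r, w = g - s. *)

From mathcomp Require Import all_boot all_algebra.
From mathcomp Require Import ring.
From Stdlib Require Import FunctionalExtensionality.
Set Implicit Arguments.
Unset Strict Implicit.
Unset Printing Implicit Defensive.

Import GRing.Theory.
Local Open Scope ring_scope.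

Lemma periodic_modn (T : Type) (m : nat) (p : nat -> T) :
  (forall a, p (a + m)%N = p a) -> forall a, p (a %% m)%N = p a.
Proof.
move=> pP a; rewrite [in RHS](divn_eq a m).
elim: (a %/ m)%N => [|q IHq]; first by rewrite mul0n add0n.
by rewrite mulSn -addnA addnC pP.
Qed.

Lemma periodic_addMz (T : Type) (m : int) (p : int -> T) :
  (forall x, p (x + m) = p x) -> forall x (k : int), p (x + k * m) = p x.
Proof.
move=> pP x k.
have pPn (q : nat) y : p (y + q%:Z * m) = p y.
  elim: q y => [|q IHq] y; first by rewrite mul0r addr0.
  by rewrite intS mulrDl mul1r [m + _]addrC addrA pP.
case: k => q; first exact: pPn.
by rewrite NegzE mulNr -(pPn q.+1 (x - _)) subrK.
Qed.

Lemma periodic_modz (T : Type) (m : int) (p : int -> T) :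
  (forall x, p (x + m) = p x) -> forall x, p (x %% m)%Z = p x.
Proof. by move=> pP x; rewrite [in RHS](divz_eq x m) addrC periodic_addMz. Qed.

Lemma doubly_periodic_modz (m n : nat) (h : grid) :
  doubly_periodic m n h -> forall i j, h (i %% m)%Z (j %% n)%Z = h i j.
Proof.
move=> hP i j.
have -> : h (i %% m)%Z (j %% n)%Z = h i (j %% n)%Z.
  by apply: (@periodic_modz _ _ (fun x => h x _)) => x; exact: (hP x _).1.
by apply: (@periodic_modz _ _ (h i)) => y; exact: (hP i y).2.
Qed.

Lemma absz_modz (d : nat) (i : int) : (0 < d)%N -> (absz (i %% d)%Z)%:Z = (i %% d)%Z.
Proof. by move=> d_gt0; rewrite gez0_abs // modz_ge0 // eqz_nat -lt0n. Qed.

Lemma absz_modzS (d : nat) (i : int) : (0 < d)%N ->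
  absz ((i + 1) %% d)%Z = ((absz (i %% d)%Z).+1 %% d)%N.
Proof.
move=> d_gt0.
by rewrite -modzDml -[(i %% d)%Z in LHS]absz_modz // addrC -intS modz_nat.
Qed.

Definition xperiod (m : nat) (f : grid) : F3 := \sum_(k < m) f k%:Z 0.
Definition yperiod (n : nat) (g : grid) : F3 := \sum_(l < n) g 0 l%:Z.

Lemma xperiod_shift (m : nat) (c : F3) (f : grid) :
  xperiod m (addg (cst c) f) = c *+ m + xperiod m f.
Proof. by rewrite /xperiod big_split sumr_const card_ord. Qed.

Lemma yperiod_shift (n : nat) (c : F3) (g : grid) :
  yperiod n (addg (cst c) g) = c *+ n + yperiod n g.
Proof. by rewrite /yperiod big_split sumr_const card_ord. Qed.

Lemma xperiod_Dx (m : nat) (h : grid) :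
  (forall i j, h (i + m%:Z) j = h i j) -> xperiod m (Dx h) = 0.
Proof.
move=> hP; rewrite /xperiod -(big_mkord xpredT (fun k => Dx h k%:Z 0)).
rewrite (telescope_sumr_eq (fun k : nat => h k%:Z 0)) // => [|k _].
  by rewrite -[m%:Z]add0r hP subrr.
by rewrite /Dx -[k.+1]addn1 PoszD.
Qed.

Lemma yperiod_Dy (n : nat) (h : grid) :
  (forall i j, h i (j + n%:Z) = h i j) -> yperiod n (Dy h) = 0.
Proof.
move=> hP; rewrite /yperiod -(big_mkord xpredT (fun l => Dy h 0 l%:Z)).
rewrite (telescope_sumr_eq (fun l : nat => h 0 l%:Z)) // => [|l _].
  by rewrite -[n%:Z]add0r hP subrr.
by rewrite /Dy -[l.+1]addn1 PoszD.
Qed.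

Lemma exact_form_periods0 (m n : nat) (u w : grid) :
  exact_form m n u w -> xperiod m u = 0 /\ yperiod n w = 0.
Proof.
move=> [h [hP [-> ->]]]; split.
  by apply: xperiod_Dx => i j; case: (hP i j).
by apply: yperiod_Dy => i j; case: (hP i j).
Qed.

Lemma xperiod_shift_exact (m n : nat) (c : F3) (u w : grid) :
  exact_form m n u w -> xperiod m (addg (cst c) u) = c *+ m.
Proof. by move=> /exact_form_periods0[u0 _]; rewrite xperiod_shift u0 addr0. Qed.

Lemma yperiod_shift_exact (m n : nat) (c : F3) (u w : grid) :
  exact_form m n u w -> yperiod n (addg (cst c) w) = c *+ n.
Proof. by move=> /exact_form_periods0[_ w0]; rewrite yperiod_shift w0 addr0. Qed.

Lemma doubly_periodic_shift (m n : nat) (c : F3) (h : grid) :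
  doubly_periodic m n h -> doubly_periodic m n (addg (cst c) h).
Proof. by move=> hP i j; rewrite /addg (hP i j).1 (hP i j).2. Qed.

Lemma closed_form_shift (r s : F3) (f g : grid) :
  closed_form f g -> closed_form (addg (cst r) f) (addg (cst s) g).
Proof.
rewrite /closed_form => fg_closed.
have -> : Dy (addg (cst r) f) = Dy f.
  do 2!apply: functional_extensionality => ?.
  by rewrite /Dy /addg /cst opprD addrACA subrr add0r.
have -> : Dx (addg (cst s) g) = Dx g.
  do 2!apply: functional_extensionality => ?.
  by rewrite /Dx /addg /cst opprD addrACA subrr add0r.
exact: fg_closed.
Qed.

Lemma addg_cstK (c : F3) (h : grid) : addg (cst (- c)) (addg (cst c) h) = h.
Proof. by do 2!apply: functional_extensionality => ?; rewrite /addg /cst addKr. Qed.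

Lemma addg_cstNK (c : F3) (h : grid) : addg (cst c) (addg (cst (- c)) h) = h.
Proof. by rewrite -[c in addg (cst c)]opprK addg_cstK. Qed.

Section Potential.

Variables (m n : nat) (F G : grid).
Hypotheses (m_gt0 : (0 < m)%N) (n_gt0 : (0 < n)%N).
Hypotheses (F_periodic : doubly_periodic m n F) (G_periodic : doubly_periodic m n G).
Hypothesis FG_closed : closed_form F G.
Hypotheses (F_period0 : xperiod m F = 0) (G_period0 : yperiod n G = 0).

Definition path_sum (a b : nat) : F3 :=
  \sum_(k < a) F k%:Z 0 + \sum_(l < b) G a%:Z l%:Z.

Lemma sum_column_closedS (a b : nat) :
  \sum_(l < b) G a.+1%:Z l%:Z = \sum_(l < b) G a%:Z l%:Z + (F a b - F a 0).
Proof.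
rewrite -(telescope_sumr_eq (fun l : nat => F a l%:Z)
                           (fun l : nat => F a l.+1%:Z - F a l)) //.
rewrite big_mkord -big_split; apply: eq_bigr => l _.
rewrite -[l.+1]addn1 -[a.+1]addn1 !PoszD.
by rewrite -[F a _ - _]/(Dy F a l) FG_closed /Dx [RHS]addrC subrK.
Qed.

Lemma path_sumSl (a b : nat) : path_sum a.+1 b = path_sum a b + F a b.
Proof. by rewrite /path_sum big_ord_recr sum_column_closedS /=; ring. Qed.

Lemma path_sumSr (a b : nat) : path_sum a b.+1 = path_sum a b + G a b.
Proof. by rewrite /path_sum big_ord_recr addrA. Qed.

Lemma sum_column0 (a : nat) : \sum_(l < n) G a%:Z l%:Z = 0.
Proof.
elim: a => [|a IHa]; first exact: G_period0.
by rewrite sum_column_closedS IHa add0r -[n%:Z]add0r (F_periodic _ _).2 subrr.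
Qed.

Lemma path_sum_addl (a b : nat) : path_sum (a + m) b = path_sum a b.
Proof.
elim: a => [|a IHa].
  rewrite /path_sum add0n big_ord0 -/(xperiod m F) F_period0; congr (_ + _).
  by apply: eq_bigr => l _; rewrite -[m%:Z]add0r (G_periodic _ _).1.
by rewrite addSn !path_sumSl IHa PoszD (F_periodic _ _).1.
Qed.

Lemma path_sum_addr (a b : nat) : path_sum a (b + n) = path_sum a b.
Proof.
elim: b => [|b IHb]; first by rewrite /path_sum big_ord0 sum_column0.
by rewrite addSn !path_sumSr IHb PoszD (G_periodic _ _).2.
Qed.

Lemma path_sum_modl (a b : nat) : path_sum (a %% m) b = path_sum a b.
Proof. exact: (@periodic_modn _ _ (path_sum^~ b) (path_sum_addl^~ b)). Qed.

Lemma path_sum_modr (a b : nat) : path_sum a (b %% n) = path_sum a b.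
Proof. exact: (@periodic_modn _ _ (path_sum a) (path_sum_addr a)). Qed.

Definition potential (i j : int) : F3 := path_sum (absz (i %% m)%Z) (absz (j %% n)%Z).

Lemma potential_periodic : doubly_periodic m n potential.
Proof. by move=> i j; rewrite /potential !modzDr. Qed.

Lemma Dx_potential : Dx potential = F.
Proof.
do 2!apply: functional_extensionality => ?; rewrite /Dx /potential absz_modzS //.
rewrite path_sum_modl path_sumSl addrC addKr.
by rewrite !absz_modz // doubly_periodic_modz.
Qed.

Lemma Dy_potential : Dy potential = G.
Proof.
do 2!apply: functional_extensionality => ?; rewrite /Dy /potential absz_modzS //.
rewrite path_sum_modr path_sumSr addrC addKr.
by rewrite !absz_modz // doubly_periodic_modz.
Qed.

Lemma closed_periods0_exact : exact_form m n F G.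
Proof.
by exists potential; rewrite Dx_potential Dy_potential; split; [exact: potential_periodic|].
Qed.

End Potential.

Theorem mainTheorem3 (m n : nat) (hm : (2 <= m)%N) (hn : (2 <= n)%N)
  (hm3 : ~~ (3 %| m)%N) (hn3 : ~~ (3 %| n)%N) (f g : grid) :
  toroidal_form m n f g -> closed_form f g ->
  exists (r s : F3) (u w : grid),
    (toroidal_form m n u w /\ exact_form m n u w /\
     f = addg (cst r) u /\ g = addg (cst s) w) /\
    forall (r' s' : F3) (u' w' : grid),
      toroidal_form m n u' w' -> exact_form m n u' w' ->
      f = addg (cst r') u' -> g = addg (cst s') w' ->
      r' = r /\ s' = s /\ u' = u /\ w' = w.
Proof.
move=> [f_periodic g_periodic] fg_closed.
have m_neq0 : m%:R != 0 :> F3 by rewrite -(dvdn_pcharf (pchar_Fp _)).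
have n_neq0 : n%:R != 0 :> F3 by rewrite -(dvdn_pcharf (pchar_Fp _)).
pose r := xperiod m f / m%:R; pose s := yperiod n g / n%:R.
have r_unique r' u' w' : exact_form m n u' w' -> f = addg (cst r') u' -> r' = r.
  move=> uw_exact f_def.
  by rewrite /r f_def (xperiod_shift_exact r' uw_exact) -[r' *+ m]mulr_natr mulfK.
have s_unique s' u' w' : exact_form m n u' w' -> g = addg (cst s') w' -> s' = s.
  move=> uw_exact g_def.
  by rewrite /s g_def (yperiod_shift_exact s' uw_exact) -[s' *+ n]mulr_natr mulfK.
exists r, s, (addg (cst (- r)) f), (addg (cst (- s)) g); split.
  split; first by split; apply: doubly_periodic_shift.
  split; last by rewrite !addg_cstNK.
  apply: closed_periods0_exact; rewrite ?xperiod_shift ?yperiod_shift.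
  - exact: leq_trans hm.
  - exact: leq_trans hn.
  - exact: doubly_periodic_shift.
  - exact: doubly_periodic_shift.
  - exact: closed_form_shift.
  - by rewrite /r mulNrn -[(_ / _) *+ m]mulr_natr divfK // addNr.
  - by rewrite /s mulNrn -[(_ / _) *+ n]mulr_natr divfK // addNr.
move=> r' s' u' w' _ uw_exact f_def g_def.
rewrite -(r_unique _ _ _ uw_exact f_def) -(s_unique _ _ _ uw_exact g_def).
by rewrite f_def g_def !addg_cstK.
Qed.
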